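(* Let $\mathfrak{U}$ be a symmetrically pseudo-amenable Banach algebra and let $z\neq0$ be an element of the center $\mathcal{Z}(\mathfrak{U})=\{z\in\mathfrak{U}: az=za \text{ for all } a\in\mathfrak{U}\}$. Then there is a net $\{f_\lambda\}_{\lambda\in\Lambda}$ in the dual space $\mathfrak{U}^*$ such that $f_\lambda(ab-ba)\to0$ for all $a,b\in\mathfrak{U}$ and $f_\lambda(z)\to1$. In particular, if $\mathfrak{U}$ is unital with unit $1$, there is a net $\{f_\lambda\}$ in $\mathfrak{U}^*$ with $f_\lambda(ab-ba)\to0$ for all $a,b\in\mathfrak{U}$ and $f_\lambda(1)\to1$.
   Context: For a Banach algebra $\mathfrak{U}$, $\mathfrak{U}\widehat{\otimes}\mathfrak{U}$ is the projective tensor product, with $a(b\otimes c)=ab\otimes c$, $(b\otimes c)a=b\otimes ca$, and $\pi(b\otimes c)=bc$ (extended linearly and continuously). The flip is $(b\otimes c)^{\circ}=c\otimes b$; $\mathbf{t}$ is symmetric if $\mathbf{t}^\circ=\mathbf{t}$. An approximate diagonal is a net $\{\mathbf{t}_\lambda\}$ in $\mathfrak{U}\widehat{\otimes}\mathfrak{U}$ (not necessarily bounded) with $a\mathbf{t}_\lambda-\mathbf{t}_\lambda a\to0$ and $\pi(\mathbf{t}_\lambda)a\to a$ for all $a\in\mathfrak{U}$. $\mathfrak{U}$ is symmetrically pseudo-amenable if it has an approximate diagonal consisting of symmetric elements. *)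

From mathcomp Require Import all_boot all_algebra.
From mathcomp Require Export complex.
From mathcomp Require Export all_classical all_reals all_analysis.
Export GRing.Theory Num.Theory.
Set Implicit Arguments.
Unset Strict Implicit.
Unset Printing Implicit Defensive.
Local Open Scope ring_scope.

Section BanachAlgebra.
Variable R : realType.
Notation C := R[i].
Variable U : completeNormedModType C.

Definition is_banach_algebra (mul : U -> U -> U) : Prop :=
  [/\ (forall a b c, mul a (mul b c) = mul (mul a b) c),
      (forall a b c, mul a (b + c) = mul a b + mul a c) /\
      (forall a b c, mul (a + b) c = mul a c + mul b c),
      (forall (k : C) a b, mul (k *: a) b = k *: mul a b),
      (forall (k : C) a b, mul a (k *: b) = k *: mul a b)
    & (forall a b, `|mul a b| <= `|a| * `|b|)].

Definition central (mul : U -> U -> U) (z : U) : Prop :=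
  forall a, mul a z = mul z a.

Definition is_dual_elt (f : U -> C) : Prop :=
  [/\ (forall x y, f (x + y) = f x + f y),
      (forall (k : C) x, f (k *: x) = k * f x)
    & exists M : C, forall x, `|f x| <= M * `|x|].

Definition directed (L : Type) (le : L -> L -> Prop) : Prop :=
  [/\ (exists l : L, True),
      (forall l, le l l),
      (forall l1 l2 l3, le l1 l2 -> le l2 l3 -> le l1 l3)
    & (forall l1 l2, exists l3, le l1 l3 /\ le l2 l3)].

Definition eventually_net (L : Type) (le : L -> L -> Prop) (P : L -> Prop) :=
  exists l0, forall l, le l0 l -> P l.

Definition net_cvg (L : Type) (le : L -> L -> Prop) (x : L -> C) (c : C) :=
  forall e : C, 0 < e -> eventually_net le (fun l => `|x l - c| < e).

(* Algebraic tensors are finite lists of elementary tensors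
   [:: (a1,b1); ...; (an,bn)] standing for sum_i a_i (x) b_i.
   Two such lists denote the same algebraic tensor iff every bilinear
   form takes the same value on them (universal property of U (x) U). *)
Definition bilinear_form (phi : U -> U -> C) : Prop :=
  [/\ (forall x y z, phi (x + y) z = phi x z + phi y z),
      (forall x y z, phi x (y + z) = phi x y + phi x z),
      (forall (k : C) x y, phi (k *: x) y = k * phi x y)
    & (forall (k : C) x y, phi x (k *: y) = k * phi x y)].

Definition ftensor := seq (U * U).

Definition ftensor_eq (s t : ftensor) : Prop :=
  forall phi, bilinear_form phi ->
    \sum_(p <- s) phi p.1 p.2 = \sum_(p <- t) phi p.1 p.2.

(* projective norm of an algebraic tensor is < e :
   inf { sum_i |x_i| |y_i| : sum_i x_i (x) y_i = s } < e *)
Definition pnorm_lt (s : ftensor) (e : C) : Prop :=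
  exists t : ftensor, ftensor_eq s t /\ \sum_(p <- t) `|p.1| * `|p.2| < e.

Definition ftsub (s t : ftensor) : ftensor := s ++ [seq (- p.1, p.2) | p <- t].
Definition ftflip (s : ftensor) : ftensor := [seq (p.2, p.1) | p <- s].
Definition ftlmul (mul : U -> U -> U) (a : U) (s : ftensor) : ftensor :=
  [seq (mul a p.1, p.2) | p <- s].
Definition ftrmul (mul : U -> U -> U) (s : ftensor) (a : U) : ftensor :=
  [seq (p.1, mul p.2 a) | p <- s].
Definition ftpi (mul : U -> U -> U) (s : ftensor) : U :=
  \sum_(p <- s) mul p.1 p.2.

(* Elements of the completion U (x)^ U : Cauchy sequences of algebraic
   tensors for the projective norm; operations act termwise. *)
Definition ptensor := nat -> ftensor.

Definition pcauchy (u : ptensor) : Prop :=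
  forall e : C, 0 < e -> exists N0 : nat, forall m n : nat,
    (N0 <= m)%N -> (N0 <= n)%N -> pnorm_lt (ftsub (u m) (u n)) e.

(* ||u - v||_pi = lim_N ||u_N - v_N||_pi is (at most) e *)
Definition pdist_lt (u v : ptensor) (e : C) : Prop :=
  exists N0 : nat, forall N : nat, (N0 <= N)%N -> pnorm_lt (ftsub (u N) (v N)) e.

Definition psymmetric (u : ptensor) : Prop :=
  forall e : C, 0 < e -> pdist_lt (fun N => ftflip (u N)) u e.

Definition approximate_diagonal (mul : U -> U -> U)
    (L : Type) (le : L -> L -> Prop) (t : L -> ptensor) : Prop :=
  [/\ directed le,
      (forall l, pcauchy (t l)),
      (forall a (e : C), 0 < e -> eventually_net le (fun l =>
          pdist_lt (fun N => ftlmul mul a (t l N)) (fun N => ftrmul mul (t l N) a) e))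
    & (forall a (e : C), 0 < e -> eventually_net le (fun l =>
          exists N0 : nat, forall N : nat, (N0 <= N)%N ->
            `|mul (ftpi mul (t l N)) a - a| < e))].

Definition symmetrically_pseudo_amenable (mul : U -> U -> U) : Prop :=
  exists (L : Type) (le : L -> L -> Prop) (t : L -> ptensor),
    approximate_diagonal mul le t /\ (forall l, psymmetric (t l)).

Definition commutator_net_at (mul : U -> U -> U) (z : U) : Prop :=
  exists (L : Type) (le : L -> L -> Prop) (f : L -> U -> C),
    [/\ directed le,
        (forall l, is_dual_elt (f l)),
        (forall a b, net_cvg le (fun l => f l (mul a b - mul b a)) 0)
      & net_cvg le (fun l => f l z) 1].

End BanachAlgebra.

From mathcomp Require Import all_boot all_algebra complex.
From mathcomp Require Import ring.
From mathcomp Require Import all_classical all_reals all_analysis.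
Import order.Order.TTheory GRing.Theory Num.Theory.
Local Open Scope ring_scope.
Local Open Scope classical_set_scope.

(* By Hahn-Banach there is g in U^* with g(z) = 1.  Writing the approximate
   diagonal as t_l = sum_i u_i (x) v_i, put f_l(x) = sum_i g(v_i x u_i): this is
   t_l paired with the bounded bilinear form (u, v) |-> g(v x u), so it makes
   sense on U (x)^ U.  By associativity f_l(ab - ba) is minus the pairing of
   a t_l - t_l a with (u, v) |-> g(v b u), hence tends to 0.  As z is central,
   f_l(z) is the flip of t_l paired with (u, v) |-> g(z u v); by symmetry of t_l
   this is close to g(z pi(t_l)) = g(pi(t_l) z), which tends to g(z) = 1. *)

(* The real structure is passed as an explicit action [sc]: it is used on the
   underlying real space of a complex normed space. *)
Section RealHahnBanach.
Variables (R : realType) (V : zmodType) (sc : R -> V -> V) (p : V -> R).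
Hypotheses (scDr : forall r x y, sc r (x + y) = sc r x + sc r y)
  (scDl : forall r s x, sc (r + s) x = sc r x + sc s x)
  (scA : forall r s x, sc r (sc s x) = sc (r * s) x)
  (sc1 : forall x, sc 1 x = x)
  (pD : forall x y, p (x + y) <= p x + p y)
  (pZ : forall r x, p (sc r x) = `|r| * p x).

Lemma sc0 x : sc 0 x = 0.
Proof. by apply: (addrI (sc 0 x)); rewrite -scDl !addr0. Qed.

Lemma scN r x : sc (- r) x = - sc r x.
Proof. by apply/eqP; rewrite -subr_eq0 opprK -scDl addNr sc0. Qed.

Lemma scrN r x : sc r (- x) = - sc r x.
Proof. by rewrite -{1}[x]sc1 -scN scA mulrN1 scN. Qed.

Lemma p0 : p 0 = 0.
Proof. by rewrite -(sc0 0) pZ normr0 mul0r. Qed.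

Lemma pN x : p (- x) = p x.
Proof. by rewrite -{1}[x]sc1 -scN pZ normrN normr1 mul1r. Qed.

Lemma p_ge0 x : 0 <= p x.
Proof.
have := pD x (- x); rewrite subrr p0 pN -mulr2n -mulr_natr.
by rewrite pmulr_lge0.
Qed.

(* Partial functionals are handled through their graphs, so that Zorn's lemma
   can be applied to set inclusion. *)
Definition dominated_extension (z : V) (A : set (V * R)) :=
  [/\ forall r, A (sc r z, r * p z),
      forall x a b, A (x, a) -> A (x, b) -> a = b,
      forall x y a b, A (x, a) -> A (y, b) -> A (x + y, a + b),
      forall r x a, A (x, a) -> A (sc r x, r * a)
    & forall x a, A (x, a) -> a <= p x].

Lemma dominated_extension00 {z A} : dominated_extension z A -> A (0, 0).
Proof. by case=> /(_ 0); rewrite sc0 mul0r. Qed.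

(* c := sup {a - p(x - y) | (x, a) in A}, which subadditivity bounds by every
   p(x' + y) - a'. *)
Lemma dominated_extension_gap {z A} y : dominated_extension z A ->
  exists c, forall x a, A (x, a) -> a + c <= p (x + y) /\ a - c <= p (x - y).
Proof.
move=> hA; have A00 := dominated_extension00 hA; case: hA => _ _ Aadd _ Ale.
pose S := [set t | exists x a, A (x, a) /\ t = a - p (x - y)].
have S_ub x' a' : A (x', a') -> ubound S (p (x' + y) - a').
  move=> Ax' _ [x [a [Ax ->]]].
  rewrite lerBrDr addrAC lerBlDr.
  apply: le_trans (Ale _ _ (Aadd _ _ _ _ Ax Ax')) _.
  have -> : x + x' = (x - y) + (x' + y) by rewrite addrCA subrK addrC.
  by rewrite [X in _ <= X]addrC pD.
have supS : has_sup S.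
  split; first by exists (0 - p (0 - y)), 0, 0.
  by exists (p (0 + y) - 0); exact: S_ub A00.
exists (sup S) => x a Ax; split.
  by rewrite -lerBrDl; apply: ge_sup (S_ub _ _ Ax); case: supS.
by rewrite lerBlDr -lerBlDl; apply: sup_upper_bound => //; exists x, a.
Qed.

Section OneStepExtension.
Variables (z y : V) (A : set (V * R)) (c : R).
Hypotheses (hA : dominated_extension z A) (yA : forall a, ~ A (y, a))
  (gap : forall x a, A (x, a) -> a + c <= p (x + y) /\ a - c <= p (x - y)).

Definition extend_graph : set (V * R) :=
  [set t | exists x a r, A (x, a) /\ t = (x + sc r y, a + r * c)].

Lemma extend_graphP {x a} r : A (x, a) -> extend_graph (x + sc r y, a + r * c).
Proof. by move=> Ax; exists x, a, r. Qed.

Lemma extend_graph_functional x a b :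
  extend_graph (x, a) -> extend_graph (x, b) -> a = b.
Proof.
case: hA => _ Afun Aadd Asc _.
move=> [x1 [a1 [r1 [A1 [-> ->]]]]] [x2 [a2 [r2 [A2 []]]]].
have [<- /addIr ex12 ->|r12] := eqVneq r1 r2.
  by move: A2; rewrite -ex12 => /(Afun _ _ _ A1) ->.
move=> ex12; exfalso; apply: (yA ((r1 - r2)^-1 * (a2 - a1))).
have ey : sc (r1 - r2) y = x2 - x1.
  rewrite scDl scN; apply: (addIr (x1 + sc r2 y)).
  by rewrite addrCA subrK addrA subrK ex12.
have -> : y = sc (r1 - r2)^-1 (x2 - x1) by rewrite -ey scA mulVf ?subr_eq0 // sc1.
by apply/Asc/Aadd => //; have := Asc (-1) _ _ A1; rewrite scN sc1 mulN1r.
Qed.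

(* For r > 0 apply the upper gap inequality to x / r, for r < 0 the lower one
   to x / (-r), and scale back. *)
Lemma extend_graph_le x a : extend_graph (x, a) -> a <= p x.
Proof.
case: hA => _ _ _ Asc _.
move=> [x1 [a1 [r [A1 [-> ->]]]]].
have [r_lt0|r_gt0|->] := ltgtP r 0.
- have Nr_gt0 : 0 < - r by rewrite oppr_gt0.
  have := (gap _ _ (Asc (- r)^-1 _ _ A1)).2 => /(ler_wpM2l (ltW Nr_gt0)).
  rewrite -[X in _ <= X * p _]gtr0_norm // -pZ scDr scA mulfV ?gt_eqF // sc1.
  rewrite scrN scN opprK mulrBr mulrA mulfV ?gt_eqF // mul1r.
  by rewrite mulNr opprK.
- have := (gap _ _ (Asc r^-1 _ _ A1)).1 => /(ler_wpM2l (ltW r_gt0)).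
  rewrite -[X in _ <= X * p _]gtr0_norm // -pZ scDr scA mulfV ?gt_eqF // sc1.
  by rewrite mulrDr mulrA mulfV ?gt_eqF // mul1r.
- by rewrite sc0 addr0 mul0r addr0; case: hA => _ _ _ _; apply.
Qed.

Lemma extend_graph_dominated : dominated_extension z extend_graph.
Proof.
case: hA => Aline _ Aadd Asc _; split.
- by move=> r; have := extend_graphP 0 (Aline r); rewrite sc0 mul0r !addr0.
- exact: extend_graph_functional.
- move=> _ _ _ _ [x1 [a1 [r1 [A1 [-> ->]]]]] [x2 [a2 [r2 [A2 [-> ->]]]]].
  rewrite addrACA -scDl addrACA -mulrDl.
  exact/extend_graphP/Aadd.
- move=> s _ _ [x1 [a1 [r1 [A1 [-> ->]]]]].
  rewrite scDr scA mulrDr mulrA; exact/extend_graphP/Asc.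
- exact: extend_graph_le.
Qed.

Lemma extend_graph_proper : A `<` extend_graph.
Proof.
split=> [[x a] Ax|AB]; first by have := extend_graphP 0 Ax; rewrite sc0 mul0r !addr0.
have := extend_graphP 1 (dominated_extension00 hA).
by rewrite sc1 mul1r !add0r => /AB /yA.
Qed.

End OneStepExtension.

Lemma dominated_extension_step {z A y} : dominated_extension z A ->
  (forall a, ~ A (y, a)) -> exists B, dominated_extension z B /\ A `<` B.
Proof.
move=> hA yA; have [c gap] := dominated_extension_gap y hA.
exists (extend_graph y A c).
by split; [apply: extend_graph_dominated hA yA gap | apply: extend_graph_proper hA yA].
Qed.

Lemma dominated_extension_line z :
  dominated_extension z [set q | exists r, q = (sc r z, r * p z)].
Proof.
split.
- by move=> r; exists r.
- move=> x a b [r [ex ->]] [s [ex' ->]].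
  have : p (sc (r - s) z) = 0 by rewrite scDl scN -ex -ex' subrr p0.
  rewrite pZ => /eqP; rewrite mulf_eq0 normr_eq0 subr_eq0.
  by case/orP=> [/eqP -> // | /eqP ->]; rewrite !mulr0.
- by move=> x y a b [r [-> ->]] [s [-> ->]]; exists (r + s); rewrite scDl mulrDl.
- by move=> s x a [r [-> ->]]; exists (s * r); rewrite scA mulrA.
- by move=> x a [r [-> ->]]; rewrite pZ ler_wpM2r ?p_ge0 ?ler_norm.
Qed.

Lemma dominated_extension_chain z (F : set (set (V * R))) :
  F `<=` [set A | A = set0 \/ dominated_extension z A] -> total_on F subset ->
  \bigcup_(X in F) X = set0 \/ dominated_extension z (\bigcup_(X in F) X).
Proof.
move=> FP Ftot; set U := \bigcup_(X in F) X.
have [[q [X0 FX0 X0q]]|U0] := pselect (U !=set0); last first.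
  by left; apply/seteqP; split=> // q Uq; apply: U0; exists q.
have FD X w : F X -> X w -> dominated_extension z X.
  by move=> FX Xw; case: (FP X FX) => // X_0; move: Xw; rewrite X_0.
have common X1 X2 q1 q2 : F X1 -> F X2 -> X1 q1 -> X2 q2 ->
    exists2 Y, dominated_extension z Y & [/\ F Y, Y q1 & Y q2].
  move=> F1 F2 X1q X2q; have [S12|S21] := Ftot _ _ F1 F2.
    by exists X2; [exact: FD F2 X2q | split=> //; apply: S12].
  by exists X1; [exact: FD F1 X1q | split=> //; apply: S21].
right; split.
- by move=> r; exists X0 => //; case: (FD _ _ FX0 X0q).
- move=> x a b [X1 F1 X1q] [X2 F2 X2q].
  by have [Y [_ Yfun _ _ _] [_ Y1 Y2]] := common _ _ _ _ F1 F2 X1q X2q; apply: Yfun Y1 Y2.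
- move=> x y a b [X1 F1 X1q] [X2 F2 X2q].
  have [Y [_ _ Yadd _ _] [FY Y1 Y2]] := common _ _ _ _ F1 F2 X1q X2q.
  by exists Y => //; apply: Yadd.
- move=> r x a [X1 F1 X1q]; exists X1 => //.
  by case: (FD _ _ F1 X1q) => _ _ _ Xsc _; apply: Xsc.
- by move=> x a [X1 F1 X1q]; case: (FD _ _ F1 X1q) => _ _ _ _; apply.
Qed.

Lemma hahn_banach_seminorm z : exists h : V -> R,
  [/\ forall x y, h (x + y) = h x + h y, forall r x, h (sc r x) = r * h x,
      forall x, h x <= p x & h z = p z].
Proof.
have [A [PA Amax]] := Zorn_bigcup (@dominated_extension_chain z).
have hA : dominated_extension z A.
  case: PA => // A0; exfalso; apply: (Amax _ _ (or_intror (dominated_extension_line z))).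
  by rewrite A0; split=> // /(_ (sc 0 z, 0 * p z)); apply; exists 0.
have total y : exists a, A (y, a).
  apply/not_existsP => yA.
  have [B [hB AB]] := dominated_extension_step hA yA.
  exact: Amax AB (or_intror hB).
have [h hA'] := choice total; case: hA => Aline Afun Aadd Asc Ale.
exists h; split.
- by move=> x y; apply: Afun (hA' _) (Aadd _ _ _ _ (hA' x) (hA' y)).
- by move=> r x; apply: Afun (hA' _) (Asc r _ _ (hA' x)).
- by move=> x; apply: Ale (hA' x).
- by apply: Afun (hA' z) _; have := Aline 1; rewrite sc1 mul1r.
Qed.

End RealHahnBanach.

Local Open Scope complex_scope.

Lemma normr_real_complex {R : realType} (r : R) : `|r%:C| = `|r|%:C.
Proof. by rewrite normc_def /= expr0n addr0 sqrtr_sqr. Qed.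

Lemma normr_i {R : realType} : `|'i : R[i]| = 1.
Proof. by rewrite normc_def /= expr0n add0r expr1n sqrtr1. Qed.

Lemma ge0_complexE {R : realType} {x : R[i]} : 0 <= x -> x = (complex.Re x)%:C.
Proof.
by rewrite lecE /= => /andP[/eqP Im0 _]; rewrite [LHS]complexE Im0 mulr0 addr0.
Qed.

Lemma exists_pos_real_mul_lt {R : realType} {A e : R[i]} : 0 <= A -> 0 < e ->
  exists2 r : R, 0 < r & A * r%:C < e.
Proof.
move=> A0 e0; have w0 : 0 < e / (A + 1) by rewrite divr_gt0 // ltr_wpDl.
exists (complex.Re (e / (A + 1))); first by move: w0; rewrite ltcE => /andP[].
rewrite -(ge0_complexE (ltW w0)) mulrA ltr_pdivrMr ?ltr_wpDl // mulrC ltr_pM2l //.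
by rewrite ltrDl ltr01.
Qed.

Section ComplexDual.
Context {R : realType} {U : normedModType R[i]}.

Lemma real_dominated_functional (z : U) : exists h : U -> R,
  [/\ forall x y, h (x + y) = h x + h y, forall (r : R) x, h (r%:C *: x) = r * h x,
      forall x, `|h x| <= complex.Re `|x| & h z = complex.Re `|z|].
Proof.
pose p (x : U) := complex.Re `|x|.
have pD x y : p (x + y) <= p x + p y.
  by have := ler_normD x y; rewrite lecE => /andP[_]; rewrite raddfD.
have pZ r x : p (r%:C *: x) = `|r| * p x.
  by rewrite /p normrZ normr_real_complex; case: `|x| => a b /=; rewrite mul0r subr0.
pose sc (r : R) (x : U) := r%:C *: x.
have scDl r s x : sc (r + s) x = sc r x + sc s x by rewrite /sc raddfD scalerDl.
have scA r s x : sc r (sc s x) = sc (r * s) x by rewrite /sc scalerA rmorphM.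
have [h [hD hZ hp hz]] :=
  @hahn_banach_seminorm _ _ sc p (fun r => @scalerDr _ _ r%:C) scDl scA (@scale1r _ _)
    pD pZ z.
exists h; split => // x.
have hN : h (- x) = - h x by rewrite -scaleN1r -(rmorphN1 (real_complex R)) hZ mulN1r.
by rewrite ler_norml hp andbT lerNl -hN (le_trans (hp _)) // /p normrN.
Qed.

Definition bounded_functional (g : U -> R[i]) (G : R[i]) :=
  [/\ forall x y, g (x + y) = g x + g y, forall k x, g (k *: x) = k * g x,
      0 <= G & forall x, `|g x| <= G * `|x|].

Section Complexification.
Variable h : U -> R.
Hypotheses (hD : forall x y, h (x + y) = h x + h y)
  (hZ : forall (r : R) x, h (r%:C *: x) = r * h x)
  (h_le : forall x, `|h x| <= complex.Re `|x|).

(* A complex functional is determined by its real part h, since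
   Im g(x) = - Re g(i x). *)
Definition complexify (x : U) : R[i] := (h x)%:C - 'i * (h ('i *: x))%:C.

Lemma complexifyD x y : complexify (x + y) = complexify x + complexify y.
Proof. by rewrite /complexify scalerDr !hD !raddfD mulrDr opprD addrACA. Qed.

Lemma complexifyZ k x : complexify (k *: x) = k * complexify x.
Proof.
have hN y : h (- y) = - h y by rewrite -scaleN1r -(rmorphN1 (real_complex R)) hZ mulN1r.
have complexifyR (r : R) y : complexify (r%:C *: y) = r%:C * complexify y.
  rewrite /complexify.
  have -> : 'i *: (r%:C *: y) = r%:C *: ('i *: y) by rewrite !scalerA mulrC.
  rewrite !hZ; ring.
have complexifyI y : complexify ('i *: y) = 'i * complexify y.
  rewrite /complexify scalerA mulCii scaleN1r hN raddfN.
  by rewrite mulrN opprK mulrBr mulrA mulCii mulN1r opprK addrC.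
rewrite [k]complexE scalerDl -scalerA complexifyD complexifyI !complexifyR.
by rewrite mulrDl mulrA.
Qed.

Lemma complexify_le x : `|complexify x| <= 2 * `|x|.
Proof.
rewrite /complexify (ge0_complexE (normr_ge0 x)); apply: le_trans (ler_normB _ _) _.
rewrite normrM normr_i mul1r !normr_real_complex mulr2n mulrDl mul1r.
apply: lerD; rewrite lecR; first exact: h_le.
by rewrite (le_trans (h_le _)) // normrZ normr_i mul1r.
Qed.

Lemma Re_complexify x : complex.Re (complexify x) = h x.
Proof. by rewrite /complexify /= mul0r mulr0 subrr subr0. Qed.

End Complexification.

Lemma exists_bounded_functional_at {z : U} : z != 0 ->
  exists g G, bounded_functional g G /\ g z = 1.
Proof.
move=> z0; have [h [hD hZ h_le hz]] := real_dominated_functional z.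
have gz_gt0 : 0 < complex.Re (complexify h z).
  by rewrite Re_complexify hz; move: (normr_gt0 z); rewrite z0 ltcE => /andP[].
have gz0 : complexify h z != 0.
  by apply: contraTneq gz_gt0 => ->; rewrite ltxx.
exists (fun x => complexify h x / complexify h z), (2 / `|complexify h z|).
split; last by rewrite mulfV.
split=> [x y|k x||x].
- by rewrite complexifyD // mulrDl.
- by rewrite complexifyZ // mulrA.
- by rewrite divr_ge0 ?ler0n.
- rewrite normrM normfV mulrAC ler_pM2r ?invr_gt0 ?normr_gt0 //.
  exact: complexify_le.
Qed.

End ComplexDual.

Section TensorEvaluation.
Context {R : realType} {U : completeNormedModType R[i]}.
Implicit Types (phi : U -> U -> R[i]) (s t : ftensor U) (x y : U) (K e : R[i]).

Definition tensor_eval (phi : U -> U -> R[i]) (s : ftensor U) : R[i] :=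
  \sum_(q <- s) phi q.1 q.2.

Definition bounded_bilinear (phi : U -> U -> R[i]) (K : R[i]) :=
  [/\ bilinear_form phi, 0 <= K & forall u v, `|phi u v| <= K * (`|u| * `|v|)].

Lemma bilinear_formNl phi x y : bilinear_form phi -> phi (- x) y = - phi x y.
Proof.
case=> phiDl _ _ _; apply: (addrI (phi x y)); rewrite -phiDl !subrr.
by apply: (addrI (phi 0 y)); rewrite -phiDl !addr0.
Qed.

Lemma tensor_eval_sub phi s t : bilinear_form phi ->
  tensor_eval phi (ftsub s t) = tensor_eval phi s - tensor_eval phi t.
Proof.
move=> phiB; rewrite /tensor_eval big_cat big_map /= -sumrN.
by congr (_ + _); apply: eq_bigr => q _; rewrite bilinear_formNl.
Qed.

Lemma tensor_eval_flip phi s :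
  tensor_eval phi (ftflip s) = tensor_eval (fun u v => phi v u) s.
Proof. by rewrite /tensor_eval big_map. Qed.

Lemma tensor_eval_le {phi K s e} : bounded_bilinear phi K -> pnorm_lt s e ->
  `|tensor_eval phi s| <= K * e.
Proof.
case=> phiB K0 phiK [s' [ss' s'e]]; rewrite /tensor_eval (ss' phi phiB).
apply: le_trans (ler_norm_sum _ _ _) _.
apply: le_trans (ler_sum _ (fun q _ => phiK q.1 q.2)) _.
by rewrite -mulr_sumr ler_wpM2l // ltW.
Qed.

Lemma tensor_eval_dist_le {phi K s t e} : bounded_bilinear phi K ->
  pnorm_lt (ftsub s t) e -> `|tensor_eval phi s - tensor_eval phi t| <= K * e.
Proof.
by move=> phiK; rewrite -tensor_eval_sub; [exact: tensor_eval_le | case: phiK].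
Qed.

End TensorEvaluation.

(* The elements t_l of U (x)^ U are only given as Cauchy sequences, so the
   net is indexed by pairs (l, r): the functional at (l, r) reads t_l at a
   rank beyond which the sequence t_l is r-Cauchy. *)
Definition refine_le (R : realType) {L : Type} (le : L -> L -> Prop)
    (p q : L * {r : R | 0 < r}) :=
  le p.1 q.1 /\ sval q.2 <= sval p.2.

Section TensorNets.
Context {R : realType} {U : completeNormedModType R[i]} {L : Type}.
Context {le : L -> L -> Prop} {t : L -> ptensor U}.

Lemma directed_refine_le : directed le -> directed (refine_le R le).
Proof.
case=> [[l0 _] le_refl le_trans' le_ub]; split.
- by exists (l0, exist (fun r => 0 < r) 1 ltr01).
- by move=> [l r]; split.
- move=> [l1 r1] [l2 r2] [l3 r3] [l12 r21] [l23 r32]; split.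
    exact: le_trans' l12 l23.
  exact: le_trans r32 r21.
- move=> [l1 [r1 r1_gt0]] [l2 [r2 r2_gt0]]; have [l3 [l13 l23]] := le_ub l1 l2.
  have r3_gt0 : 0 < Num.min r1 r2 by rewrite lt_min r1_gt0.
  exists (l3, exist (fun r => 0 < r) _ r3_gt0).
  by split; split=> //=; rewrite ge_min lexx ?orbT.
Qed.

Lemma net_cvg_tensor_eval {phi : U -> U -> R[i]} {K K' c : R[i]}
    {N : L * {r : R | 0 < r} -> nat} :
  bounded_bilinear phi K -> 0 <= K' ->
  (forall lr m n, (N lr <= m)%N -> (N lr <= n)%N ->
     pnorm_lt (ftsub (t lr.1 m) (t lr.1 n)) (sval lr.2)%:C) ->
  (forall e, 0 < e -> eventually_net le (fun l => exists N0, forall n,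
     (N0 <= n)%N -> `|tensor_eval phi (t l n) - c| <= K' * e)) ->
  net_cvg (refine_le R le) (fun lr => tensor_eval phi (t lr.1 (N lr))) c.
Proof.
move=> phiK K'0 tN tc e e0; have [_ K0 _] := phiK.
have [r r0 Kr] := exists_pos_real_mul_lt (addr_ge0 K0 K'0) e0.
have r0C : 0 < r%:C by rewrite ltcR.
have [l0 tcl0] := tc _ r0C.
exists (l0, exist (fun r => 0 < r) r r0) => lr [l0l /= r'r].
have [N0 tcN0] := tcl0 _ l0l; pose n := maxn N0 (N lr).
apply: le_lt_trans Kr; rewrite mulrDl.
set fN := tensor_eval phi (t lr.1 (N lr)); set fn := tensor_eval phi (t lr.1 n).
have -> : fN - c = (fN - fn) + (fn - c) by rewrite addrA subrK.
apply: le_trans (ler_normD _ _) _; apply: lerD; last exact: tcN0 (leq_maxl _ _).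
apply: le_trans (tensor_eval_dist_le phiK (tN lr _ n (leqnn _) (leq_maxr _ _))) _.
by rewrite ler_wpM2l // lecR.
Qed.

End TensorNets.

Definition sandwich_form {R : realType} {U : normedModType R[i]}
  (mul : U -> U -> U) (g : U -> R[i]) (x u v : U) : R[i] := g (mul (mul v x) u).

Definition product_form {R : realType} {U : normedModType R[i]}
  (mul : U -> U -> U) (g : U -> R[i]) (z u v : U) : R[i] := g (mul z (mul u v)).

Section BanachAlgebra.
Context {R : realType} {U : completeNormedModType R[i]} {mul : U -> U -> U}.
Hypothesis hB : is_banach_algebra mul.

Lemma bmulr0 a : mul a 0 = 0.
Proof.
by case: hB => _ [mDr _] _ _ _; apply: (addrI (mul a 0)); rewrite -mDr !addr0.
Qed.

Lemma bmulBr a b c : mul a (b - c) = mul a b - mul a c.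
Proof.
case: hB => _ [mDr _] _ _ _; rewrite mDr; congr (_ + _).
by apply: (addrI (mul a c)); rewrite -mDr !subrr bmulr0.
Qed.

Lemma bmulBl a b c : mul (a - b) c = mul a c - mul b c.
Proof.
case: hB => _ [_ mDl] _ _ _; rewrite mDl; congr (_ + _).
apply: (addrI (mul b c)); rewrite -mDl !subrr.
by apply: (addrI (mul 0 c)); rewrite -mDl !addr0.
Qed.

Lemma bmul_sumr a s : mul a (ftpi mul s) = \sum_(q <- s) mul a (mul q.1 q.2).
Proof. by case: hB => _ [mDr _] _ _ _; rewrite (big_morph _ (mDr a) (bmulr0 a)). Qed.

Section Functional.
Context {g : U -> R[i]} {G : R[i]}.
Hypothesis hg : bounded_functional g G.

Lemma bounded_functional0 : g 0 = 0.
Proof. by case: hg => gD _ _ _; apply: (addrI (g 0)); rewrite -gD !addr0. Qed.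

Lemma bounded_functionalB x y : g (x - y) = g x - g y.
Proof.
case: hg => gD _ _ _; rewrite gD; congr (_ + _).
by apply: (addrI (g y)); rewrite -gD !subrr bounded_functional0.
Qed.

Lemma bounded_bilinear_sandwich x :
  bounded_bilinear (sandwich_form mul g x) (G * `|x|).
Proof.
case: hB => _ [mDr mDl] mZl mZr mN; case: hg => gD gZ G0 gG.
split; rewrite ?mulr_ge0 //; first split=> [u1 u2 v|u v1 v2|k u v|k u v].
- by rewrite /sandwich_form mDr gD.
- by rewrite /sandwich_form !mDl gD.
- by rewrite /sandwich_form mZr gZ.
- by rewrite /sandwich_form !mZl gZ.
move=> u v; apply: le_trans (gG _) _; rewrite -mulrA ler_wpM2l //.
apply: le_trans (mN _ _) _; rewrite [`|u| * _]mulrC mulrA [`|x| * _]mulrC.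
by rewrite ler_wpM2r // mN.
Qed.

Lemma bounded_bilinear_product z :
  bounded_bilinear (product_form mul g z) (G * `|z|).
Proof.
case: hB => _ [mDr mDl] mZl mZr mN; case: hg => gD gZ G0 gG.
split; rewrite ?mulr_ge0 //; first split=> [u1 u2 v|u v1 v2|k u v|k u v].
- by rewrite /product_form mDl mDr gD.
- by rewrite /product_form !mDr gD.
- by rewrite /product_form mZl mZr gZ.
- by rewrite /product_form !mZr gZ.
move=> u v; apply: le_trans (gG _) _; rewrite -mulrA ler_wpM2l //.
by apply: le_trans (mN _ _) _; rewrite ler_wpM2l // mN.
Qed.

Lemma is_dual_elt_sandwich s :
  is_dual_elt (fun x => tensor_eval (sandwich_form mul g x) s).
Proof.
case: hB => _ [mDr mDl] mZl mZr _; case: hg => gD gZ G0 _.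
split=> [x y|k x|].
- rewrite /tensor_eval -big_split; apply: eq_bigr => q _.
  by rewrite /sandwich_form mDr mDl gD.
- rewrite /tensor_eval mulr_sumr; apply: eq_bigr => q _.
  by rewrite /sandwich_form mZr mZl gZ.
exists (G * \sum_(q <- s) `|q.1| * `|q.2|) => x.
apply: le_trans (ler_norm_sum _ _ _) _.
have [_ _ bound] := bounded_bilinear_sandwich x.
apply: le_trans (ler_sum _ (fun q _ => bound q.1 q.2)) _.
by rewrite -mulr_sumr mulrAC.
Qed.

Lemma tensor_eval_sandwich_commutator a b s :
  tensor_eval (sandwich_form mul g (mul a b - mul b a)) s =
  - tensor_eval (sandwich_form mul g b) (ftsub (ftlmul mul a s) (ftrmul mul s a)).
Proof.
have [bil _ _] := bounded_bilinear_sandwich b; case: hB => mA _ _ _ _.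
rewrite tensor_eval_sub // /tensor_eval !big_map opprB -sumrB.
apply: eq_bigr => q _; rewrite /sandwich_form bmulBr bmulBl bounded_functionalB.
by rewrite !mA.
Qed.

Lemma tensor_eval_sandwich_central z s : central mul z ->
  tensor_eval (sandwich_form mul g z) s = tensor_eval (product_form mul g z) (ftflip s).
Proof.
move=> zc; rewrite tensor_eval_flip; apply: eq_bigr => q _.
by case: hB => mA _ _ _ _; rewrite /sandwich_form /product_form mA zc.
Qed.

Lemma tensor_eval_product z s :
  tensor_eval (product_form mul g z) s = g (mul z (ftpi mul s)).
Proof.
by case: hg => gD _ _ _; rewrite bmul_sumr (big_morph _ gD bounded_functional0).
Qed.

End Functional.
End BanachAlgebra.

Lemma commutator_net_at_of_functional (R : realType) (U : completeNormedModType R[i])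
    (mul : U -> U -> U) (g : U -> R[i]) (G : R[i]) (z : U) :
  is_banach_algebra mul -> bounded_functional g G -> central mul z -> g z = 1 ->
  symmetrically_pseudo_amenable mul -> commutator_net_at mul z.
Proof.
move=> hB hg zc gz [L [le [t [[dir tc diag_comm diag_unit] tsym]]]].
have [G0 gG] : 0 <= G /\ forall x, `|g x| <= G * `|x| by case: hg.
have pos_C (r : {r : R | 0 < r}) : 0 < (sval r)%:C by rewrite ltcR; exact: valP.
have [N tN] := choice (fun lr : L * {r : R | 0 < r} => tc lr.1 _ (pos_C lr.2)).
exists _, (refine_le R le),
  (fun lr x => tensor_eval (sandwich_form mul g x) (t lr.1 (N lr))).
split=> [||a b|].
- exact: directed_refine_le.
- move=> lr; exact: (is_dual_elt_sandwich hB hg (t lr.1 (N lr))).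
- apply: (net_cvg_tensor_eval (bounded_bilinear_sandwich hB hg _) _ tN); last first.
    move=> e e0; have [l0 comm_l0] := diag_comm a e e0.
    exists l0 => l /comm_l0 [N0 commN0]; exists N0 => n /commN0 comm_n.
    rewrite subr0 (tensor_eval_sandwich_commutator hB hg) normrN.
    exact: tensor_eval_le (bounded_bilinear_sandwich hB hg b) comm_n.
  by rewrite mulr_ge0.
- apply: (net_cvg_tensor_eval (K' := G * `|z| + G)
    (bounded_bilinear_sandwich hB hg _) _ tN).
    by rewrite addr_ge0 ?mulr_ge0.
  move=> e e0; have [l0 unit_l0] := diag_unit z e e0.
  exists l0 => l /unit_l0 [N1 unitN1]; have [N2 symN2] := tsym l e e0.
  exists (maxn N1 N2) => n; rewrite geq_max => /andP[n_ge1 n_ge2].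
  rewrite (tensor_eval_sandwich_central hB) //.
  set P := tensor_eval (product_form mul g z).
  have -> : P (ftflip (t l n)) - 1 = (P (ftflip (t l n)) - P (t l n)) + (P (t l n) - 1).
    by rewrite addrA subrK.
  rewrite mulrDl; apply: le_trans (ler_normD _ _) _; apply: lerD.
    exact: tensor_eval_dist_le (bounded_bilinear_product hB hg z) (symN2 _ n_ge2).
  rewrite /P (tensor_eval_product hB hg) -zc -gz -(bounded_functionalB hg).
  by apply: le_trans (gG _) _; rewrite ler_wpM2l // ltW // unitN1.
Qed.

Theorem proposition3p4 (R : realType) (U : completeNormedModType R[i])
    (mul : U -> U -> U) :
  is_banach_algebra mul ->
  symmetrically_pseudo_amenable mul ->
  (forall z : U, central mul z -> z != 0 -> commutator_net_at mul z) /\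
  (forall e : U, e != 0 -> (forall a, mul e a = a /\ mul a e = a) ->
     commutator_net_at mul e).
Proof.
move=> hB hS.
have net_at z : central mul z -> z != 0 -> commutator_net_at mul z.
  move=> zc z0; have [g [G [hg gz]]] := exists_bounded_functional_at z0.
  exact: commutator_net_at_of_functional hB hg zc gz hS.
split=> // e e0 unit_e; apply: net_at e0 => a.
by have [-> ->] := unit_e a.
Qed.
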